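(* Let $X$ be a vertex-weighted simplicial complex on $n$ vertices, fix $k$, and let $U^{h}$ be a $\Pi^\pm_k$-projected $(1,\alpha,0)$-unitary encoding of $\Pi^\pm_kP\Pi^\pm_k$, i.e. $(\Pi^\pm_k\otimes\langle0^\alpha|)U^{h}(\Pi^\pm_k\otimes|0^\alpha\rangle)=\Pi^\pm_kP\Pi^\pm_k$. Let $V^{h}=((I_n\otimes HZ\otimes I)\otimes I_\alpha)U^{h}$, where $HZ$ (product of Hadamard and Pauli-$Z$) acts on qubit $n+1$. Then $(\Pi_k\otimes\langle0^\alpha|)V^{h}(\Pi_k\otimes|0^\alpha\rangle)=\frac{\Delta_k}{K\sqrt2}$.
   Context: Vertices $V=\{1,\dots,n\}$ with weights $w:V\to(0,\infty)$. $X$ is a family of nonempty subsets of $V$ closed under nonempty subsets; $X_k$ = $k$-simplices (size $k+1$), identified with Hamming-weight-$(k+1)$ strings $x_\sigma\in\{0,1\}^n$. Oriented $k$-simplex: ordering $[v_0,\dots,v_k]$ up to even permutations, positive if an even permutation of the increasing order. $X^\pm_k=X^+_k\cup X^-_k$, $\overline\sigma$ opposite orientation, $\sigma_+$ the positive one of $\sigma,\overline\sigma$. $[v_0,\dots,v_k]$ induces on the face missing $v_j$ the orientation $(-1)^j[v_0,..,\widehat{v_j},..,v_k]$ and on a coface $\sigma\cup\{u\}$ the orientation $[u,v_0,\dots,v_k]$. For oriented $\sigma,\sigma'$ with distinct underlying simplices, $\sigma\sim_\downarrow\sigma'$ if they share a $(k-1)$-face and induce the same orientation on it; $\sigma\sim_\uparrow\sigma'$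 if their union is a $(k+1)$-simplex of $X$ on which they induce the same orientation; $\nsim_\uparrow$ is its negation; $v_\sigma$ ($v_{\sigma'}$) is the vertex of $\sigma$ not in $\sigma'$ (vice versa); $\mathrm{up}(\sigma)=\{u:\sigma\cup\{u\}\in X_{k+1}\}$. $\Delta_k$ is the matrix indexed by $X^+_k$ with $(\Delta_k)_{\sigma\sigma}=\sum_{u\in\mathrm{up}(\sigma)}w(u)^2+\sum_{v\in\sigma}w(v)^2$, $(\Delta_k)_{\sigma\sigma'}=w(v_\sigma)w(v_{\sigma'})$ if $\sigma\sim_\downarrow\sigma'$ and $\sigma\nsim_\uparrow\overline{\sigma'}$, $-w(v_\sigma)w(v_{\sigma'})$ if $\sigma\sim_\downarrow\overline{\sigma'}$ and $\sigma\nsim_\uparrow\sigma'$, $0$ otherwise. $\Theta$ is an absorbing state, $S_k=X^\pm_k\cup\{\Theta\}$; $|\sigma\rangle$ is the $(n+2)$-qubit state $|x_\sigma\rangle|00\rangle$ ($\sigma\in X^+_k$), $|x_\sigma\rangle|10\rangle$ ($\sigma\in X^-_k$), $|0^n\rangle|01\rangle$ ($\Theta$). $\Pi_k$, $\Pi^\pm_k$ project onto $\mathrm{span}\{|\sigma\rangle\}$ over $X^+_k$, $X^\pm_k$; matrices indexed by $X^+_k$ or $S_k$ act on these spans in this basis and as $0$ elsewhere. $U$ is a $\Pi_s$-projected $(a,\alpha,\epsilon)$-unitary encoding of $A$ if $\|A-a(\Pi_s\otimes\langle0^\alpha|)U(\Pi_s\otimes|0^\alpha\rangle)\|\le\epsilon$.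 For $\sigma\in X^\pm_k$: $i(\sigma)$ = position of the $i$-th $0$ of $x_\sigma$, $\tilde j(\sigma)$ = position of its $j$-th $1$. $K=\max_{\sigma\in X^\pm_k}\big(\sum_{i\in[n]}w(i)^2+\sum_{i\in[n-k-1],j\in[k+1]}w(i(\sigma))w(\tilde j(\sigma))\big)$; $\eta_\sigma=1-\frac1K\sum_{\sigma'\in X^+_k}|(\Delta_k)_{\sigma'\sigma_+}|$. $P$ on $S_k$: for $\sigma,\sigma'\in X^\pm_k$, $P_{\sigma\sigma}=(\sum_{u\in\mathrm{up}(\sigma)}w(u)^2+\sum_{v\in\sigma}w(v)^2)/K$, $P_{\sigma\sigma'}=w(v_\sigma)w(v_{\sigma'})/K$ if $\sigma\sim_\downarrow\sigma'$ and $\sigma\nsim_\uparrow\overline{\sigma'}$, $P_{\sigma\Theta}=\eta_\sigma$, $P_{\Theta\Theta}=1$, all other entries $0$. *)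

From HB Require Import structures.
From mathcomp Require Import all_boot all_order all_algebra.
From mathcomp Require Import mxtens zify.
Set Implicit Arguments. Unset Strict Implicit. Unset Printing Implicit Defensive.
Import Order.TTheory GRing.Theory Num.Theory.
Local Open Scope ring_scope.

Definition simplicial_complex (n : nat) (X : {set {set 'I_n}}) : Prop :=
  (forall s, s \in X -> s != set0) /\
  (forall s t : {set 'I_n}, s \in X -> t \subset s -> t != set0 -> t \in X).

Definition Xk n (X : {set {set 'I_n}}) (k : nat) : {set {set 'I_n}} :=
  [set s in X | #|s| == k.+1].

(* Oriented simplex: (underlying simplex, b) ; b = false : positive
   orientation (even permutation of increasing order), b = true : negative. *)
Definition osim n := ({set 'I_n} * bool)%type.

Definition opp n (o : osim n) : osim n := (o.1, ~~ o.2).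

Definition Xpm n (X : {set {set 'I_n}}) k : {set osim n} :=
  [set o | o.1 \in Xk X k].

Definition rk n (s : {set 'I_n}) (v : 'I_n) : nat :=
  #|[set u in s | (u < v)%N]|.

(* Sign (true = negative w.r.t. the positive=increasing orientation) of the
   orientation induced by o:
   - on the face o.1 \ {v} (v in o.1, v = v_j): (-1)^j [v_0,..,^v_j,..,v_k];
   - on the coface o.1 U {v} (v notin o.1): [v, v_0, ..., v_k].
   In both cases this is o.2 xor (parity of #{u in o.1 | u < v}). *)
Definition isign n (o : osim n) (v : 'I_n) : bool := o.2 (+) odd (rk o.1 v).

Definition adjacent n (s t : {set 'I_n}) : bool :=
  [&& s != t, #|s| == #|t| & #|s :&: t| == #|s|.-1].

Definition vdiff n (s t : {set 'I_n}) : option 'I_n := [pick v in s :\: t].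

Definition sim_down n (o o' : osim n) : bool :=
  adjacent o.1 o'.1 &&
  match vdiff o.1 o'.1, vdiff o'.1 o.1 with
  | Some a, Some b => isign o a == isign o' b
  | _, _ => false
  end.

(* sigma ~up sigma' : union is a (k+1)-simplex of X, same induced orientation *)
Definition sim_up n (X : {set {set 'I_n}}) (o o' : osim n) : bool :=
  [&& adjacent o.1 o'.1, (o.1 :|: o'.1) \in X &
  match vdiff o.1 o'.1, vdiff o'.1 o.1 with
  | Some a, Some b => isign o b == isign o' a
  | _, _ => false
  end].

Section Weights.
Variable C : numClosedFieldType.

Definition wdiff n (w : 'I_n -> C) (s t : {set 'I_n}) : C :=
  if vdiff s t is Some v then w v else 0.

Definition diagw n (X : {set {set 'I_n}}) (w : 'I_n -> C) (s : {set 'I_n}) : C :=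
  \sum_(u | (u \notin s) && ((u |: s) \in X)) w u ^+ 2 + \sum_(v in s) w v ^+ 2.

(* Delta_k, indexed by positive simplices (identified with X^+_k = X_k) *)
Definition Delta n (X : {set {set 'I_n}}) (w : 'I_n -> C) (s t : {set 'I_n}) : C :=
  if s == t then diagw X w s
  else if sim_down (s, false) (t, false) && ~~ sim_up X (s, false) (t, true)
  then wdiff w s t * wdiff w t s
  else if sim_down (s, false) (t, true) && ~~ sim_up X (s, false) (t, false)
  then - (wdiff w s t * wdiff w t s)
  else 0.

(* K = max over X^{+-}_k of
     sum_{i in [n]} w(i)^2 + sum_{i in [n-k-1], j in [k+1]} w(i(s)) w(~j(s)),
   the double sum being the sum over all (zero position, one position) pairs
   of x_s, i.e. over u notin s, v in s. *)
Definition Kval n (w : 'I_n -> C) (o : osim n) : C :=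
  \sum_(i < n) w i ^+ 2 + \sum_(u in ~: o.1) \sum_(v in o.1) w u * w v.

Definition Kconst n (X : {set {set 'I_n}}) (k : nat) (w : 'I_n -> C) : C :=
  \big[Order.max/0]_(o in Xpm X k) Kval w o.

Definition eta n (X : {set {set 'I_n}}) (k : nat) (w : 'I_n -> C) (o : osim n) : C :=
  1 - (Kconst X k w)^-1 * \sum_(s in Xk X k) `|Delta X w s (o.1)|.

(* P on S_k = X^{+-}_k + {Theta}; None stands for Theta *)
Definition Pmat n (X : {set {set 'I_n}}) (k : nat) (w : 'I_n -> C)
  (a b : option (osim n)) : C :=
  match a, b with
  | Some o, Some o' =>
      if o == o' then diagw X w o.1 / Kconst X k w
      else if sim_down o o' && ~~ sim_up X o (opp o')
      then wdiff w o.1 o'.1 * wdiff w o'.1 o.1 / Kconst X k w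
      else 0
  | Some o, None => eta X k w o
  | None, None => 1
  | None, Some _ => 0
  end.

End Weights.

Lemma pow2_gt0 (m : nat) : (0 < 2 ^ m)%N.
Proof. by rewrite expn_gt0. Qed.

(* x_s read as an n-bit integer, qubit/vertex i (0-based) being the
   (i+1)-th most significant bit *)
Definition bitsval n (s : {set 'I_n}) : nat := \sum_(i in s) 2 ^ (n.-1 - i).

Lemma bitsval_lt n (s : {set 'I_n}) : (bitsval s < 2 ^ n)%N.
Proof.
rewrite /bitsval.
apply: (@leq_ltn_trans (\sum_(i < n) 2 ^ (n.-1 - i))).
  by rewrite [X in (_ <= X)%N](bigID (mem s)) /= leq_addr.
clear s; elim: n => [|n IH]; first by rewrite big_ord0.
rewrite big_ord_recl /= subn0.
have -> : (\sum_(i < n) 2 ^ (n - bump 0 i) = \sum_(i < n) 2 ^ (n.-1 - i))%N.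
  by apply: eq_bigr => i _; rewrite /bump /= add1n subnS -subn1 subnAC subn1.
rewrite expnS; lia.
Qed.

Definition xcode n (s : {set 'I_n}) : 'I_(2 ^ n) := Ordinal (bitsval_lt s).

(* system register: n qubits, then qubits n+1, n+2 ; dimension *)
Definition sysdim n := (2 ^ n * 2 * 2)%N.

Definition qb (b : bool) : 'I_2 := if b then ord_max else ord0.

Definition basis_idx n (x : 'I_(2 ^ n)) (b1 b2 : bool) : 'I_(sysdim n) :=
  mxtens_index (mxtens_index (x, qb b1), qb b2).

(* |sigma> = |x_s>|00> (positive), |x_s>|10> (negative); |Theta> = |0^n>|01> *)
Definition ket_o n (o : osim n) : 'I_(sysdim n) := basis_idx (xcode o.1) o.2 false.
Definition ket_S n (a : option (osim n)) : 'I_(sysdim n) :=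
  if a is Some o then ket_o o else basis_idx (Ordinal (pow2_gt0 n)) false true.

Section Operators.
Variable C : numClosedFieldType.

Definition PiK n (X : {set {set 'I_n}}) k : 'M[C]_(sysdim n) :=
  \sum_(s in Xk X k) delta_mx (ket_o (s, false)) (ket_o (s, false)).
Definition PiPM n (X : {set {set 'I_n}}) k : 'M[C]_(sysdim n) :=
  \sum_(o in Xpm X k) delta_mx (ket_o o) (ket_o o).

Definition Pop n (X : {set {set 'I_n}}) k (w : 'I_n -> C) : 'M[C]_(sysdim n) :=
  \sum_(a in [set Some o | o in Xpm X k] :|: [set None])
  \sum_(b in [set Some o | o in Xpm X k] :|: [set None])
    Pmat X k w a b *: delta_mx (ket_S a) (ket_S b).
Definition Deltaop n (X : {set {set 'I_n}}) k (w : 'I_n -> C) : 'M[C]_(sysdim n) :=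
  \sum_(s in Xk X k) \sum_(t in Xk X k)
    Delta X w s t *: delta_mx (ket_o (s, false)) (ket_o (t, false)).

Definition compress0 m (a : nat) (A : 'M[C]_(m * 2 ^ a)) : 'M[C]_m :=
  \matrix_(i, j) A (mxtens_index (i, Ordinal (pow2_gt0 a)))
                   (mxtens_index (j, Ordinal (pow2_gt0 a))).

Definition adjmx m (A : 'M[C]_m) : 'M[C]_m := (map_mx Num.conj A)^T.

Definition Hgate : 'M[C]_2 :=
  (sqrtC 2)^-1 *: \matrix_(i, j) (if ((i : nat) == 1%N) && ((j : nat) == 1%N) then -1 else 1).
Definition Zgate : 'M[C]_2 :=
  \matrix_(i, j) (if i == j then (if (i : nat) == 0%N then 1 else -1) else 0).

Definition HZlift n (a : nat) : 'M[C]_(sysdim n * 2 ^ a) :=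
  ((1%:M : 'M[C]_(2 ^ n)) *t (Hgate *m Zgate) *t (1%:M : 'M[C]_2))
    *t (1%:M : 'M[C]_(2 ^ a)).

End Operators.

From Pilot Require Import Defs.
From HB Require Import structures.
From mathcomp Require Import all_boot all_order all_algebra.
From mathcomp Require Import mxtens zify.
Set Implicit Arguments. Unset Strict Implicit. Unset Printing Implicit Defensive.
Import Order.TTheory GRing.Theory Num.Theory.
Local Open Scope ring_scope.

(* Only the rows of V at positive simplices |σ,+> are probed.  On qubit n+1,
   HZ sends the bra <0| to (<0| - <1|)/√2, so that row of the compressed V is
   (row |σ,+> - row |σ,->)/√2 of the compressed U, whose entries on X^±_k are
   those of P.  Flipping both orientations preserves ~↓ and ~↑, hence the ~↓
   condition of P_{σ-,τ+} is exactly the negative case of Δ_k, the two cases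
   exclude each other, and P_{σ+,τ+} - P_{σ-,τ+} = (Δ_k)_{στ}/K. *)

Lemma sum_bits_inj m (f g : 'I_m -> bool) :
  (\sum_(i < m) f i * 2 ^ i = \sum_(i < m) g i * 2 ^ i)%N -> f =1 g.
Proof.
elim: m f g => [|m IH] f g; first by move=> _ [].
have shift (h : 'I_m.+1 -> bool) : (\sum_(i < m.+1) h i * 2 ^ i
    = h ord0 + 2 * \sum_(i < m) h (lift ord0 i) * 2 ^ i)%N.
  rewrite big_ord_recl expn0 muln1 big_distrr; congr (_ + _)%N.
  by apply: eq_bigr => i _; rewrite expnS mulnCA.
rewrite !shift => eq_fg.
have f0 : f ord0 = g ord0 by move: eq_fg; case: (f ord0); case: (g ord0) => //=; lia.
have /IH f_lift : (\sum_(i < m) f (lift ord0 i) * 2 ^ i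
    = \sum_(i < m) g (lift ord0 i) * 2 ^ i)%N by move: eq_fg; rewrite f0; lia.
by move=> i; case: (unliftP ord0 i) => [j ->|->].
Qed.

Lemma bitsval_inj n : injective (@bitsval n).
Proof.
have bitsE (s : {set 'I_n}) : bitsval s = (\sum_(j < n) (rev_ord j \in s) * 2 ^ j)%N.
  rewrite /bitsval big_mkcond (reindex_inj rev_ord_inj) /=; apply: eq_bigr => j _.
  case: (rev_ord j \in s); rewrite ?mul1n ?mul0n //=.
  by congr (2 ^ _)%N; have := ltn_ord j; lia.
move=> s t; rewrite !bitsE => /sum_bits_inj eq_st.
by apply/setP => v; rewrite -[v]rev_ordK eq_st.
Qed.

Lemma xcode_inj n : injective (@xcode n).
Proof. by move=> s t /(congr1 val) /bitsval_inj. Qed.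

Lemma qb_inj : injective qb.
Proof. by case; case. Qed.

Lemma basis_idx_inj n x b1 b2 y c1 c2 :
  @basis_idx n x b1 b2 = basis_idx y c1 c2 -> [/\ x = y, b1 = c1 & b2 = c2].
Proof.
have tens_inj p q : injective (@mxtens_index p q) := can_inj (@mxtens_indexK p q).
rewrite /basis_idx => /tens_inj/pair_equal_spec [/tens_inj/pair_equal_spec [-> +] +].
by move=> /qb_inj -> /qb_inj ->.
Qed.

Lemma ket_o_inj n : injective (@ket_o n).
Proof. by move=> [s b] [t c] /basis_idx_inj [/xcode_inj /= -> -> _]. Qed.

Lemma ket_S_inj n : injective (@ket_S n).
Proof.
move=> [o|] [o'|] //=; first by move/ket_o_inj->.
all: by rewrite /ket_o => /basis_idx_inj [].
Qed.

Lemma sum_mxtens_index (R : nmodType) m p (F : 'I_(m * p) -> R) :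
  \sum_(l < m * p) F l = \sum_(x < m) \sum_(y < p) F (mxtens_index (x, y)).
Proof.
rewrite pair_big /= (reindex (@mxtens_index m p)) /=; first by apply: eq_bigr => -[].
by exists (@mxtens_unindex m p) => l _; rewrite (mxtens_indexK, mxtens_unindexK).
Qed.

Lemma sum_qubit (R : nmodType) (F : 'I_2 -> R) :
  \sum_(c < 2) F c = F (qb false) + F (qb true).
Proof. by rewrite big_ord_recr big_ord1; congr (F _ + _); apply: val_inj. Qed.

Section DiagonalProjectors.
Variables (R : pzRingType) (N : nat).

Lemma delta_mul_mx_delta (B : 'M[R]_N) a c :
  delta_mx a a *m B *m delta_mx c c = B a c *: delta_mx a c.
Proof.
apply/matrixP => i j; rewrite !mxE (bigD1 c) //= big1 ?addr0; last first.
  by move=> l /negbTE neq_lc; rewrite [delta_mx c c l j]mxE neq_lc mulr0.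
rewrite !mxE (bigD1 a) //= big1 ?addr0; last first.
  by move=> l /negbTE neq_la; rewrite mxE neq_la andbF mul0r.
rewrite !mxE !eqxx.
by case: (i == a); case: (j == c); rewrite /= ?mul1r ?mulr1 ?mul0r ?mulr0.
Qed.

Variables (I : finType) (f : I -> 'I_N).

Definition diag_proj (A : {set I}) : 'M[R]_N := \sum_(x in A) delta_mx (f x) (f x).

Lemma diag_proj_sandwich (A : {set I}) (B : 'M[R]_N) :
  diag_proj A *m B *m diag_proj A
  = \sum_(x in A) \sum_(y in A) B (f x) (f y) *: delta_mx (f x) (f y).
Proof.
rewrite !mulmx_suml; apply: eq_bigr => x _.
by rewrite mulmx_sumr; apply: eq_bigr => y _; apply: delta_mul_mx_delta.
Qed.

Hypothesis f_inj : injective f.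

Lemma sum_scale_delta_mxE (A : {set I}) (c : I -> I -> R) a b :
  a \in A -> b \in A ->
  (\sum_(x in A) \sum_(y in A) c x y *: delta_mx (f x) (f y) : 'M[R]_N) (f a) (f b)
  = c a b.
Proof.
move=> aA bA; rewrite summxE (bigD1 a aA) /= [X in _ + X]big1 ?addr0; last first.
  move=> x /andP [_ neq_xa]; rewrite summxE big1 // => y _.
  by rewrite !mxE !(inj_eq f_inj) eq_sym (negbTE neq_xa) mulr0.
rewrite summxE (bigD1 b bA) /= [X in _ + X]big1 ?addr0; last first.
  move=> y /andP [_ neq_yb].
  by rewrite !mxE !(inj_eq f_inj) eq_sym (negbTE neq_yb) andbF mulr0.
by rewrite !mxE !eqxx mulr1.
Qed.

Lemma diag_proj_sandwich_entry (A : {set I}) (B1 B2 : 'M[R]_N) a b :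
  diag_proj A *m B1 *m diag_proj A = diag_proj A *m B2 *m diag_proj A ->
  a \in A -> b \in A -> B1 (f a) (f b) = B2 (f a) (f b).
Proof.
move=> /(congr1 (fun M : 'M_N => M (f a) (f b))) eq_B aA bA.
by move: eq_B; rewrite !diag_proj_sandwich !sum_scale_delta_mxE.
Qed.

End DiagonalProjectors.

Section QubitRegister.
Variable C : numClosedFieldType.

Lemma compress0_tens1_mul m a (M : 'M[C]_m) (U : 'M[C]_(m * 2 ^ a)) :
  compress0 (M *t (1%:M : 'M_(2 ^ a)) *m U) = M *m compress0 U.
Proof.
apply/matrixP => i j; rewrite !mxE sum_mxtens_index; apply: eq_bigr => x _.
rewrite (bigD1 (Ordinal (pow2_gt0 a))) //= big1 ?addr0; last first.
  by move=> y neq_y0; rewrite tensmxE mxE eq_sym (negbTE neq_y0) mulr0 mul0r.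
by rewrite tensmxE !mxE eqxx mulr1.
Qed.

Lemma tens_qubit_gate_mulE n m (M : 'M[C]_2) (B : 'M[C]_(sysdim n, m)) x b1 b2 j :
  ((1%:M : 'M_(2 ^ n)) *t M *t (1%:M : 'M_2) *m B) (basis_idx x b1 b2) j
  = M (qb b1) (qb false) * B (basis_idx x false b2) j
    + M (qb b1) (qb true) * B (basis_idx x true b2) j.
Proof.
rewrite mxE !sum_mxtens_index [\sum_(i < 2 ^ n) _](bigD1 x) //=.
rewrite [X in _ + X]big1 ?addr0; last first.
  move=> y neq_yx; apply: big1 => c _; apply: big1 => d _.
  by rewrite !tensmxE !mxE eq_sym (negbTE neq_yx) !mul0r.
rewrite !sum_qubit !tensmxE !mxE !eqxx !(inj_eq qb_inj).
by case: b2; rewrite /= ?mulr1 ?mulr0 ?mul1r ?mul0r ?addr0 ?add0r.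
Qed.

Lemma HZgate_row0 b : (Hgate C *m Zgate C) (qb false) (qb b) = (-1) ^+ b / sqrtC 2.
Proof.
rewrite mxE sum_qubit !mxE /=.
by case: b; rewrite /= ?mulr1 ?mulr0 ?addr0 ?add0r ?mulrN1 ?expr1 ?expr0 ?mulNr ?mul1r.
Qed.

Lemma compress0_HZlift_ket_pos n a (U : 'M[C]_(sysdim n * 2 ^ a)) s j :
  compress0 (HZlift C n a *m U) (ket_o (s, false)) j
  = (compress0 U (ket_o (s, false)) j - compress0 U (ket_o (s, true)) j) / sqrtC 2.
Proof.
rewrite /HZlift compress0_tens1_mul [ket_o (s, false)]/ket_o tens_qubit_gate_mulE.
rewrite !HZgate_row0 expr0 expr1 mulN1r !mul1r mulNr mulrBl.
by rewrite [_^-1 * _]mulrC [_^-1 * _]mulrC.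
Qed.

End QubitRegister.

Section Orientations.
Variable n : nat.
Implicit Types (o : osim n) (s : {set 'I_n}).

Lemma isign_opp o v : isign (Defs.opp o) v = ~~ isign o v.
Proof. by rewrite /isign /= addNb. Qed.

Lemma sim_down_opp o (o' : osim n) :
  sim_down (Defs.opp o) (Defs.opp o') = sim_down o o'.
Proof.
by rewrite /sim_down /=; case: (vdiff o.1 o'.1) => [a|]; case: (vdiff o'.1 o.1) => [b|];
  rewrite ?isign_opp ?eqb_negLR ?negbK.
Qed.

Lemma sim_up_opp X o (o' : osim n) :
  sim_up X (Defs.opp o) (Defs.opp o') = sim_up X o o'.
Proof.
by rewrite /sim_up /=; case: (vdiff o.1 o'.1) => [a|]; case: (vdiff o'.1 o.1) => [b|];
  rewrite ?isign_opp ?eqb_negLR ?negbK.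
Qed.

Lemma sim_down_oppr o (o' : osim n) :
  sim_down o o' -> sim_down o (Defs.opp o') = false.
Proof.
rewrite /sim_down /=; case: (vdiff o.1 o'.1) => [a|]; case: (vdiff o'.1 o.1) => [b|];
  rewrite /= ?andbF // isign_opp andbC => /andP [/eqP -> _].
by case: (isign o' b); rewrite andbF.
Qed.

Lemma sim_down_same_simplex s b c : sim_down (s, b) (s, c) = false.
Proof. by rewrite /sim_down /adjacent eqxx. Qed.

End Orientations.

Lemma Pmat_pos_sub_neg (C : numClosedFieldType) n (X : {set {set 'I_n}}) k
    (w : 'I_n -> C) s t :
  Pmat X k w (Some (s, false)) (Some (t, false))
    - Pmat X k w (Some (s, true)) (Some (t, false))
  = Delta X w s t / Kconst X k w.
Proof.
rewrite /Pmat /Delta !xpair_eqE andbT andbF.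
have [<-|_] := eqP; first by rewrite sim_down_same_simplex subr0.
rewrite -[sim_down (s, true) _]sim_down_opp -[sim_up X (s, true) _]sim_up_opp.
rewrite /Defs.opp /=.
have [down_pos|_] := boolP (sim_down (s, false) (t, false)).
  by rewrite (sim_down_oppr down_pos) /= subr0; case: ifP; rewrite ?mul0r.
by case: ifP; rewrite /= sub0r ?mulNr ?oppr0 ?mul0r.
Qed.

Lemma Pop_ket_o (C : numClosedFieldType) n (X : {set {set 'I_n}}) k (w : 'I_n -> C)
    o o' : o \in Xpm X k -> o' \in Xpm X k ->
  Pop X k w (ket_o o) (ket_o o') = Pmat X k w (Some o) (Some o').
Proof.
have S_k c : c \in Xpm X k -> Some c \in [set Some o | o in Xpm X k] :|: [set None].
  by move=> cX; rewrite in_setU imset_f.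
move=> /S_k oS /S_k o'S.
exact: (sum_scale_delta_mxE (@ket_S_inj n) (Pmat X k w) oS o'S).
Qed.

Lemma Pop_block_entry (C : numClosedFieldType) n (X : {set {set 'I_n}}) k
    (w : 'I_n -> C) (A : 'M[C]_(sysdim n)) o o' :
  PiPM C X k *m A *m PiPM C X k = PiPM C X k *m Pop X k w *m PiPM C X k ->
  o \in Xpm X k -> o' \in Xpm X k ->
  A (ket_o o) (ket_o o') = Pmat X k w (Some o) (Some o').
Proof.
move=> blockA oX o'X; rewrite -Pop_ket_o //.
exact: (diag_proj_sandwich_entry (@ket_o_inj n) blockA oX o'X).
Qed.

Theorem proposition3p9 (C : numClosedFieldType) (n : nat)
  (X : {set {set 'I_n}}) (w : 'I_n -> C) (k alpha : nat)
  (U : 'M[C]_(sysdim n * 2 ^ alpha)) :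
  simplicial_complex X ->
  (forall v, 0 < w v) ->
  U *m adjmx U = 1%:M -> adjmx U *m U = 1%:M ->
  PiPM C X k *m compress0 U *m PiPM C X k = PiPM C X k *m Pop X k w *m PiPM C X k ->
  let V := HZlift C n alpha *m U in
  PiK C X k *m compress0 V *m PiK C X k
    = (Kconst X k w * sqrtC 2)^-1 *: Deltaop X k w.
Proof.
move=> _ _ _ _ blockU V.
have PiK_diag : PiK C X k = diag_proj C (fun s => ket_o (s, false)) (Xk X k) by [].
have mem_Xpm s b : s \in Xk X k -> (s, b) \in Xpm X k by move=> sX; rewrite /Xpm in_set.
rewrite PiK_diag diag_proj_sandwich /Deltaop scaler_sumr; apply: eq_bigr => s sX.
rewrite scaler_sumr; apply: eq_bigr => t tX; rewrite scalerA; congr (_ *: _).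
rewrite compress0_HZlift_ket_pos !(Pop_block_entry blockU) ?mem_Xpm //.
by rewrite Pmat_pos_sub_neg invfM [RHS]mulrC mulrA.
Qed.
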